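(* In the setting described in the context, for $n\ge1$ let $u_n=\min\{x\in[d,v]: f^{2n}(x)=d\}$; for $n,k\ge1$ let $u'_{n,k}=\max\{x\in[u_{n+1},u_n]: f^{2n+2k}(x)=d\}$; and for $n,k,i\ge1$ let $u_{n,k,i}=\min\{x\in[u'_{n,k},u'_{n,k+1}]: f^{2n+2k+2i}(x)=d\}$ (these sets are nonempty). Then for each $n\ge1$, $k\ge1$, $i\ge1$, on the interval $[u'_{n,k},u_{n,k,i}]$ the map $f$ has no periodic points whose least period is odd and $\le 2n+2k+2i+1$, and no periodic points whose least period is even and $\le 2n+2k+2i$ except points of least period $2n+2k+2i$ and possibly points of least period $2n+2k$ or $2n$.
   Context: Let $I$ be a compact interval and $f:I\to I$ continuous; $f^1=f$, $f^n=f\circ f^{n-1}$. A point $x_0$ is a periodic point of least period $k$ (a period-$k$ point) if $f^k(x_0)=x_0$ and $f^i(x_0)\ne x_0$ for $0<i<k$. Let $m\ge3$ be odd and let $P$ be a periodic orbit of $f$ of least period $m$. Put $e=f^{m-1}(\min P)$. Let $v\in[\min P,e)$ be a point with $f(v)=e$, and let $z\in(v,e)$ be a fixed point of $f$ (such points exist). Define $z_0=\min\{x\in[v,z]: f^2(x)=x\}$ and $d=\max\{x\in[\min P,v]: f^2(x)=z_0\}$ (both sets are nonempty). *)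

From Stdlib Require Import Reals Arith.
Open Scope R_scope.

Definition iter (f : R -> R) (n : nat) (x : R) : R := Nat.iter n f x.

Definition cont_on (f : R -> R) (a b : R) : Prop :=
  forall x, a <= x <= b -> forall eps, eps > 0 ->
    exists delta, delta > 0 /\
      forall y, a <= y <= b -> Rabs (y - x) < delta -> Rabs (f y - f x) < eps.

Definition maps_into (f : R -> R) (a b : R) : Prop :=
  forall x, a <= x <= b -> a <= f x <= b.

Definition least_period (f : R -> R) (k : nat) (x : R) : Prop :=
  (0 < k)%nat /\ iter f k x = x /\
  forall i, (0 < i < k)%nat -> iter f i x <> x.

Definition is_min (S : R -> Prop) (x : R) : Prop := S x /\ forall y, S y -> x <= y.
Definition is_max (S : R -> Prop) (x : R) : Prop := S x /\ forall y, S y -> y <= x.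

From Stdlib Require Import Reals Arith Lra Lia.
Open Scope R_scope.

(* Write g = f^2. On [v, z0[ we have g y < y <= f y, so f maps every point of
   ]d, z0[ to [z0, +oo[ while g keeps it below z0: a g-orbit that stays in
   ]d, z0[ for s steps cannot close up at the odd time 2s+1.
   The first points u_j of [d, v] with g^j u_j = d decrease strictly in j, and a
   point of [d, u_m] stays above u_(m-j) at time 2j for 0 < j < m.  By the
   extremal choice of u'_{n,k} and u_{n,k,i}, a point x between them passes
   through [d, u_k[ at time 2n and through [d, u_i[ at time 2(n+k).  These
   barriers keep its g-orbit in ]d, z0[ up to time n+k+i and forbid returns at
   even times other than 2n, 2(n+k) and 2(n+k+i). *)

Lemma iter_add (f : R -> R) j l x : iter f (j + l) x = iter f j (iter f l x).
Proof. apply Nat.iter_add. Qed.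

Lemma iter_double_add (f : R -> R) j l x :
  iter f (2 * (j + l)) x = iter f (2 * j) (iter f (2 * l) x).
Proof. rewrite <- iter_add; f_equal; lia. Qed.

Lemma iter_double_succ (f : R -> R) j x :
  iter f (2 * S j) x = iter f 2 (iter f (2 * j) x).
Proof. rewrite <- iter_add; f_equal; lia. Qed.

Lemma iter_double_succ_r (f : R -> R) j x :
  iter f (2 * S j) x = iter f (2 * j) (iter f 2 x).
Proof. rewrite <- iter_add; f_equal; lia. Qed.

Lemma iter_mul_periodic (f : R -> R) N x :
  iter f N x = x -> forall l, iter f (l * N) x = x.
Proof.
  intros HN l; induction l as [|l IH]; [reflexivity|].
  rewrite Nat.mul_succ_l, Nat.add_comm, iter_add, IH; exact HN.
Qed.

Definition clamp (a b t : R) : R := Rmax a (Rmin b t).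

Lemma clamp_id a b t : a <= t <= b -> clamp a b t = t.
Proof. intros; unfold clamp, Rmax, Rmin; repeat destruct Rle_dec; lra. Qed.

Lemma clamp_mem a b t : a <= b -> a <= clamp a b t <= b.
Proof. intros; unfold clamp, Rmax, Rmin; repeat destruct Rle_dec; lra. Qed.

Lemma clamp_dist a b s t : a <= b -> Rabs (clamp a b s - clamp a b t) <= Rabs (s - t).
Proof.
  intros; unfold clamp, Rmax, Rmin; repeat destruct Rle_dec;
    unfold Rabs; repeat destruct Rcase_abs; lra.
Qed.

Lemma continuity_clamp_comp (f : R -> R) a b :
  a <= b -> cont_on f a b -> continuity (fun t => f (clamp a b t)).
Proof.
  intros Hab Hc t eps Heps.
  destruct (Hc (clamp a b t) (clamp_mem a b t Hab) eps Heps) as [del [Hdel Hnear]].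
  exists del; split; [exact Hdel|].
  intros s [_ Hs]; simpl in *; unfold R_dist in *.
  apply Hnear; [apply clamp_mem; exact Hab|].
  eapply Rle_lt_trans; [apply clamp_dist; exact Hab|exact Hs].
Qed.

Lemma continuity_iter (F : R -> R) N : continuity F -> continuity (iter F N).
Proof.
  intros HF; induction N as [|N IH].
  - exact (derivable_continuous _ derivable_id).
  - exact (continuity_comp (iter F N) F IH HF).
Qed.

Lemma continuity_ivt (H : R -> R) x1 x2 t : continuity H -> x1 <= x2 ->
  H x1 <= t <= H x2 \/ H x2 <= t <= H x1 -> exists y, x1 <= y <= x2 /\ H y = t.
Proof.
  intros Hc Hle Hbetween.
  assert (Hc' : continuity (fun y => H y - t)).
  { apply continuity_minus; [exact Hc|apply continuity_const; intros ? ?; reflexivity]. }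
  destruct (IVT_cor (fun y => H y - t) x1 x2 Hc' Hle) as [y [Hy Hy0]].
  - destruct Hbetween as [[? ?]|[? ?]]; simpl.
    + assert (0 <= (t - H x1) * (H x2 - t)) by (apply Rmult_le_pos; lra). nra.
    + assert (0 <= (H x1 - t) * (t - H x2)) by (apply Rmult_le_pos; lra). nra.
  - exists y; split; [exact Hy|]. simpl in Hy0; lra.
Qed.

Lemma continuity_zero_min (H : R -> R) x1 x2 :
  continuity H -> (exists y, x1 <= y <= x2 /\ H y = 0) ->
  exists mu, is_min (fun y => x1 <= y <= x2 /\ H y = 0) mu.
Proof.
  intros Hc [y0 [Hy0 Hy0z]].
  set (E := fun s => forall y, x1 <= y <= x2 -> H y = 0 -> s <= y).
  destruct (completeness E) as [mu [Hub Hlub]].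
  { exists y0; intros s Hs; apply Hs; assumption. }
  { exists x1; intros y Hy _; lra. }
  assert (Hmu : forall y, x1 <= y <= x2 -> H y = 0 -> mu <= y)
    by (intros y Hy Hyz; apply Hlub; intros s Hs; apply Hs; assumption).
  assert (Hx1 : x1 <= mu) by (apply Hub; intros y Hy _; lra).
  assert (Hmu0 : mu <= y0) by (apply Hmu; assumption).
  exists mu; split; [split; [lra|]|intros y [Hy Hyz]; exact (Hmu y Hy Hyz)].
  destruct (Req_dec (H mu) 0) as [Hz|Hnz]; [exact Hz|exfalso].
  (* H stays away from 0 on a right neighbourhood of mu, so mu is not the infimum *)
  destruct (Hc mu (Rabs (H mu)) (Rabs_pos_lt _ Hnz)) as [alp [Halp Hnear]].
  assert (Hbound : E (mu + alp / 2)).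
  { intros y Hy Hyz.
    destruct (Rle_lt_dec (mu + alp / 2) y) as [Hle|Hlt]; [exact Hle|exfalso].
    pose proof (Hmu y Hy Hyz).
    assert (Hneq : mu <> y) by (intros <-; contradiction).
    assert (Hdist : R_dist y mu < alp) by (unfold R_dist; rewrite Rabs_right; lra).
    specialize (Hnear y (conj (conj I Hneq) Hdist)); simpl in Hnear; unfold R_dist in Hnear.
    rewrite Hyz, Rminus_0_l, Rabs_Ropp in Hnear; lra. }
  pose proof (Hub _ Hbound); lra.
Qed.

Section SelfMap.

Variables (a b : R) (f : R -> R).
Hypotheses (Hab : a <= b) (Hcont : cont_on f a b) (Hmaps : maps_into f a b).

Lemma iter_mem N x : a <= x <= b -> a <= iter f N x <= b.
Proof.
  intros Hx; induction N as [|N IH]; [exact Hx|].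
  exact (Hmaps _ IH).
Qed.

(* [f] agrees on [a, b] with the continuous map [f o clamp a b] of the whole line *)
Let iter_clamp_comp N x :
  a <= x <= b -> iter (fun t => f (clamp a b t)) N x = iter f N x.
Proof.
  intros Hx; induction N as [|N IH]; [reflexivity|].
  change (f (clamp a b (iter (fun t => f (clamp a b t)) N x)) = f (iter f N x)).
  rewrite IH, clamp_id; [reflexivity|exact (iter_mem N x Hx)].
Qed.

Let continuity_iter_clamp N : continuity (iter (fun t => f (clamp a b t)) N).
Proof. apply continuity_iter, continuity_clamp_comp; assumption. Qed.

Lemma iter_ivt N x1 x2 t : a <= x1 -> x1 <= x2 -> x2 <= b ->
  iter f N x1 <= t <= iter f N x2 \/ iter f N x2 <= t <= iter f N x1 ->
  exists y, x1 <= y <= x2 /\ iter f N y = t.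
Proof.
  intros H1 H12 H2 Hbetween.
  rewrite <- !(iter_clamp_comp N) in Hbetween by lra.
  destruct (continuity_ivt _ x1 x2 t (continuity_iter_clamp N) H12 Hbetween)
    as [y [Hy Hyt]].
  exists y; split; [exact Hy|]. rewrite <- iter_clamp_comp by lra; exact Hyt.
Qed.

Lemma iter_ivt_fixed N x1 x2 : a <= x1 -> x1 <= x2 -> x2 <= b ->
  iter f N x1 - x1 <= 0 <= iter f N x2 - x2 \/
  iter f N x2 - x2 <= 0 <= iter f N x1 - x1 ->
  exists y, x1 <= y <= x2 /\ iter f N y = y.
Proof.
  intros H1 H12 H2 Hbetween.
  assert (Hc : continuity (fun y => iter (fun t => f (clamp a b t)) N y - y)).
  { apply continuity_minus; [exact (continuity_iter_clamp N)|].
    exact (derivable_continuous _ derivable_id). }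
  rewrite <- !(iter_clamp_comp N) in Hbetween by lra.
  destruct (continuity_ivt _ x1 x2 0 Hc H12 Hbetween) as [y [Hy Hy0]].
  exists y; split; [exact Hy|].
  rewrite <- iter_clamp_comp by lra; simpl in Hy0; lra.
Qed.

Lemma iter_level_min N x1 x2 t : a <= x1 -> x2 <= b ->
  (exists y, x1 <= y <= x2 /\ iter f N y = t) ->
  exists u, is_min (fun y => x1 <= y <= x2 /\ iter f N y = t) u.
Proof.
  intros H1 H2 [y0 [Hy0 Hy0t]].
  assert (Hc : continuity (fun y => iter (fun s => f (clamp a b s)) N y - t)).
  { apply continuity_minus; [exact (continuity_iter_clamp N)|].
    apply continuity_const; intros ? ?; reflexivity. }
  destruct (continuity_zero_min _ x1 x2 Hc) as [u [[Hu Hut] Humin]].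
  { exists y0; split; [exact Hy0|]. rewrite iter_clamp_comp by lra; lra. }
  exists u; split.
  - split; [exact Hu|]. rewrite <- iter_clamp_comp by lra; lra.
  - intros y [Hy Hyt]. apply Humin; split; [exact Hy|].
    rewrite iter_clamp_comp by lra; lra.
Qed.

Section TwoCycle.

Variables q v e z0 d : R.
Hypotheses (Haq : a <= q) (Heb : e <= b) (Hqv : q < v) (Hvz0 : v < z0) (Hz0e : z0 < e)
  (Hfv : f v = e) (Hfe : f e = q)
  (Hz0_fix : iter f 2 z0 = z0) (Hz0_first : forall y, v <= y < z0 -> iter f 2 y <> y)
  (Hqd : q <= d) (Hdv : d <= v) (Hd_z0 : iter f 2 d = z0)
  (Hd_last : forall y, d < y <= v -> iter f 2 y <> z0).

Let iter2_v : iter f 2 v = q.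
Proof. change (f (f v) = q); rewrite Hfv; exact Hfe. Qed.

Lemma iter2_lt_id y : v <= y < z0 -> iter f 2 y < y.
Proof.
  intros Hy; destruct (Rlt_le_dec (iter f 2 y) y) as [Hlt|Hge]; [exact Hlt|exfalso].
  destruct (iter_ivt_fixed 2 v y) as [t [Ht Htfix]]; try lra.
  exact (Hz0_first t ltac:(lra) Htfix).
Qed.

Lemma le_f y : v <= y <= z0 -> y <= f y.
Proof.
  intros Hy; destruct (Rle_lt_dec y (f y)) as [Hle|Hlt]; [exact Hle|exfalso].
  destruct (iter_ivt_fixed 1 v y) as [t [Ht Htfix]]; try lra.
  { right; change (f y - y <= 0 <= f v - v); lra. }
  change (f t = t) in Htfix.
  assert (Ht2 : iter f 2 t = t) by (change (f (f t) = t); rewrite !Htfix; reflexivity).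
  destruct (Rlt_le_dec t z0) as [Htz|Hzt].
  - exact (Hz0_first t ltac:(lra) Ht2).
  - assert (t = y) by lra; subst t; lra.
Qed.

Lemma iter2_lt_z0 y : d < y < z0 -> iter f 2 y < z0.
Proof.
  intros Hy; destruct (Rle_lt_dec y v) as [Hyv|Hvy].
  - destruct (Rlt_le_dec (iter f 2 y) z0) as [Hlt|Hge]; [exact Hlt|exfalso].
    destruct (iter_ivt 2 y v z0) as [s [Hs Hs2]]; try lra.
    exact (Hd_last s ltac:(lra) Hs2).
  - pose proof (iter2_lt_id y ltac:(lra)); lra.
Qed.

Lemma z0_le_f y : d < y < z0 -> z0 <= f y.
Proof.
  intros Hy; destruct (Rle_lt_dec z0 (f y)) as [Hle|Hlt]; [exact Hle|exfalso].
  destruct (Rle_lt_dec y v) as [Hyv|Hvy].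
  - (* f y < z0 <= f z0 and f v = e: some s in ]d, v] has f^2 s = z0 *)
    pose proof (le_f z0 ltac:(lra)).
    destruct (iter_ivt 1 z0 e z0) as [t [Ht Hft]]; try lra.
    { right; change (f e <= z0 <= f z0); lra. }
    destruct (iter_ivt 1 y v t) as [s [Hs Hfs]]; try lra.
    { left; change (f y <= t <= f v); lra. }
    apply (Hd_last s); [lra|].
    change (f (f s) = z0); change (f s = t) in Hfs; change (f t = z0) in Hft.
    rewrite Hfs; exact Hft.
  - pose proof (le_f y ltac:(lra)); pose proof (le_f (f y) ltac:(lra)).
    pose proof (iter2_lt_id y ltac:(lra)); change (f (f y) < y) in H1; lra.
Qed.

Lemma iter2_lt_z0_orbit y s : y < z0 ->
  (forall j, (j <= s)%nat -> d < iter f (2 * j) y) ->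
  forall j, (j <= s)%nat -> iter f (2 * j) y < z0.
Proof.
  intros Hy Hlow j; induction j as [|j IH]; intros Hj; [exact Hy|].
  rewrite iter_double_succ; apply iter2_lt_z0; split; [apply Hlow|apply IH]; lia.
Qed.

Lemma z0_le_iter_odd y s : y < z0 ->
  (forall j, (j <= s)%nat -> d < iter f (2 * j) y) -> z0 <= iter f (2 * s + 1) y.
Proof.
  intros Hy Hlow.
  replace (2 * s + 1)%nat with (S (2 * s)) by lia.
  apply z0_le_f; split; [apply Hlow; lia|apply (iter2_lt_z0_orbit y s); auto].
Qed.

Lemma iter2_z0 j : iter f (2 * j) z0 = z0.
Proof.
  induction j as [|j IH]; [reflexivity|].
  rewrite iter_double_succ, IH; exact Hz0_fix.
Qed.

Lemma iter2_d j : (1 <= j)%nat -> iter f (2 * j) d = z0.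
Proof.
  intros Hj; destruct j as [|j]; [lia|].
  rewrite iter_double_succ_r, Hd_z0; apply iter2_z0.
Qed.

Lemma periodic_iter2_neq_d N x : (0 < N)%nat -> iter f N x = x -> x <> z0 ->
  forall j, iter f (2 * j) x <> d.
Proof.
  intros HN Hper Hx j Hj; apply Hx.
  assert (Hhit : iter f (2 * S j) x = z0) by (rewrite iter_double_succ, Hj; exact Hd_z0).
  rewrite <- (iter_mul_periodic f N x Hper (2 * S j)).
  replace (2 * S j * N)%nat with (2 * ((N - 1) * S j) + 2 * S j)%nat by nia.
  rewrite iter_add, Hhit; apply iter2_z0.
Qed.

Lemma iter2_onto t : d <= t <= v -> exists y, d <= y <= v /\ iter f 2 y = t.
Proof.
  intros Ht; apply iter_ivt; lra.
Qed.

Definition first_return (j : nat) (u : R) : Prop :=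
  is_min (fun y => d <= y <= v /\ iter f (2 * j) y = d) u.

Lemma first_return_exists j : (1 <= j)%nat -> exists u, first_return j u.
Proof.
  intros Hj; apply iter_level_min; try lra.
  induction j as [|j IH]; [lia|].
  destruct (Nat.eq_dec j 0) as [->|Hj0]; [apply iter2_onto; lra|].
  destruct IH as [t [Ht Htd]]; [lia|].
  destruct (iter2_onto t Ht) as [y [Hy Hyt]].
  exists y; split; [exact Hy|]. rewrite iter_double_succ_r, Hyt; exact Htd.
Qed.

Lemma first_return_gt_d j u : (1 <= j)%nat -> first_return j u -> d < u.
Proof.
  intros Hj [[Hu Hud] _]; destruct (Rle_lt_or_eq_dec d u) as [Hlt|Heq]; [lra|exact Hlt|].
  subst u; rewrite iter2_d in Hud by exact Hj; lra.
Qed.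

Lemma first_return_unique j u u' : first_return j u -> first_return j u' -> u = u'.
Proof.
  intros [Hu Humin] [Hu' Hu'min]; apply Rle_antisym; [apply Humin|apply Hu'min]; assumption.
Qed.

Lemma first_return_succ_lt j u u' :
  (1 <= j)%nat -> first_return j u -> first_return (S j) u' -> u' < u.
Proof.
  intros Hj [[Hu Hud] Humin] [_ Hu'min].
  destruct (iter2_onto d) as [s [Hs Hsd]]; [lra|].
  assert (Hds : d <> s) by (intros <-; lra).
  destruct (iter_ivt (2 * j) d u s) as [y [Hy Hys]]; try lra.
  { right; rewrite Hud, iter2_d by exact Hj; lra. }
  assert (u' <= y) by (apply Hu'min; split; [lra|rewrite iter_double_succ, Hys; exact Hsd]).
  destruct (Rle_lt_or_eq_dec y u) as [Hlt|Heq]; [lra|lra|].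
  subst y; rewrite Hud in Hys; contradiction.
Qed.

Lemma lt_first_return y l ul :
  first_return l ul -> y <= ul -> iter f (2 * l) y <> d -> y < ul.
Proof.
  intros [[_ Huld] _] Hy Hyd.
  destruct (Rle_lt_or_eq_dec y ul Hy) as [Hlt| ->]; [exact Hlt|contradiction].
Qed.

Lemma first_return_decreasing j l u u' :
  (1 <= j < l)%nat -> first_return j u -> first_return l u' -> u' < u.
Proof.
  intros Hjl Hu; revert u'; induction l as [|l IH]; intros u' Hu'; [lia|].
  destruct (Nat.eq_dec j l) as [<-|Hne]; [exact (first_return_succ_lt j u u' ltac:(lia) Hu Hu')|].
  destruct (first_return_exists l) as [u'' Hu'']; [lia|].
  pose proof (IH ltac:(lia) u'' Hu'').
  pose proof (first_return_succ_lt l u'' u' ltac:(lia) Hu'' Hu'); lra.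
Qed.

(* otherwise f^(2j) would take the value [lam] at some t in [d, y[, and then
   f^(2m) t = d with t < u_m *)
Lemma first_return_barrier m um y j lam : first_return m um -> d <= y <= um ->
  (1 <= j <= m)%nat -> lam <= z0 -> iter f (2 * (m - j)) lam = d ->
  lam <= iter f (2 * j) y.
Proof.
  intros [[Hum _] Hummin] Hy Hj Hlam Hlamd.
  destruct (Rle_lt_dec lam (iter f (2 * j) y)) as [Hle|Hlt]; [exact Hle|exfalso].
  destruct (iter_ivt (2 * j) d y lam) as [t [Ht Htlam]]; try lra.
  { right; rewrite iter2_d by lia; lra. }
  assert (um <= t).
  { apply Hummin; split; [lra|].
    replace m with (m - j + j)%nat by lia; rewrite iter_double_add, Htlam; exact Hlamd. }
  assert (t = y) by lra; subst t; lra.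
Qed.

Lemma iter2_ge_d m um y j : first_return m um -> d <= y <= um -> (j <= m)%nat ->
  d <= iter f (2 * j) y.
Proof.
  intros Hum Hy Hj.
  destruct (Nat.eq_dec j 0) as [->|Hj0]; [exact (proj1 Hy)|].
  destruct (Nat.eq_dec j m) as [->|Hjm].
  - apply (first_return_barrier m um); [exact Hum|exact Hy|lia|lra|].
    rewrite Nat.sub_diag; reflexivity.
  - destruct (first_return_exists (m - j)) as [u [[Hu Hud] Humin]]; [lia|].
    pose proof (first_return_barrier m um y j u Hum Hy ltac:(lia) ltac:(lra) Hud); lra.
Qed.

Lemma return_index_lt m um y j l ul : first_return m um -> d <= y <= um ->
  (1 <= j < m)%nat -> (1 <= l)%nat -> first_return l ul -> iter f (2 * j) y < ul ->
  (l < m - j)%nat.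
Proof.
  intros Hum Hy Hj Hl Hul Hlt.
  destruct (first_return_exists (m - j)) as [u Hu]; [lia|].
  assert (u <= iter f (2 * j) y).
  { destruct Hu as [[Hu Hud] _].
    exact (first_return_barrier m um y j u Hum Hy ltac:(lia) ltac:(lra) Hud). }
  destruct (lt_eq_lt_dec l (m - j)) as [[Hl'|Hl']|Hl']; [exact Hl'|exfalso..].
  - subst l; rewrite (first_return_unique _ _ _ Hul Hu) in Hlt; lra.
  - pose proof (first_return_decreasing (m - j) l u ul ltac:(lia) Hu Hul); lra.
Qed.

Section Window.

Variables (n k i : nat) (un un1 w w1 c x : R).
Hypotheses (Hn : (1 <= n)%nat) (Hk : (1 <= k)%nat) (Hi : (1 <= i)%nat)
  (Hun : first_return n un) (Hun1 : first_return (n + 1) un1)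
  (Hw : is_max (fun y => un1 <= y <= un /\ iter f (2 * (n + k)) y = d) w)
  (Hw1 : w1 <= un)
  (Hc : is_min (fun y => w <= y <= w1 /\ iter f (2 * (n + k + i)) y = d) c)
  (Hx : w <= x <= c).

Let window_mem : d < w /\ x <= un <= v.
Proof.
  pose proof (first_return_gt_d (n + 1) un1 ltac:(lia) Hun1).
  destruct Hun as [[Hun_mem _] _]; destruct Hw as [[Hw_mem _] _].
  destruct Hc as [[Hc_mem _] _]; lra.
Qed.

Lemma window_iter_n_le uk : first_return k uk -> iter f (2 * n) x <= uk.
Proof.
  pose proof window_mem.
  intros [[Huk Hukd] _]; destruct Hun as [[Hun_mem Hund] _]; destruct Hw as [[Hw_mem _] Hwmax].
  destruct (Rle_lt_dec (iter f (2 * n) x) uk) as [Hle|Hlt]; [exact Hle|exfalso].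
  destruct (iter_ivt (2 * n) x un uk) as [t [Ht Htuk]]; try lra.
  assert (t <= w).
  { apply Hwmax; split; [lra|]. rewrite Nat.add_comm, iter_double_add, Htuk; exact Hukd. }
  assert (t = x) by lra; subst t; lra.
Qed.

Lemma window_iter_nk_ge_d : d <= iter f (2 * (n + k)) x.
Proof.
  pose proof window_mem.
  destruct Hun as [[Hun_mem Hund] _]; destruct Hw as [[Hw_mem _] Hwmax].
  destruct (Rle_lt_dec d (iter f (2 * (n + k)) x)) as [Hle|Hlt]; [exact Hle|exfalso].
  assert (Hunz0 : iter f (2 * (n + k)) un = z0)
    by (rewrite Nat.add_comm, iter_double_add, Hund; apply iter2_d; exact Hk).
  destruct (iter_ivt (2 * (n + k)) x un d) as [t [Ht Htd]]; try lra.
  assert (t <= w) by (apply Hwmax; split; [lra|exact Htd]).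
  assert (t = x) by lra; subst t; lra.
Qed.

Lemma window_iter_nk_le ui : first_return i ui -> iter f (2 * (n + k)) x <= ui.
Proof.
  pose proof window_mem.
  intros [[Hui Huid] _]; destruct Hw as [[Hw_mem Hwd] _]; destruct Hc as [[Hc_mem _] Hcmin].
  destruct (Rle_lt_dec (iter f (2 * (n + k)) x) ui) as [Hle|Hlt]; [exact Hle|exfalso].
  destruct (iter_ivt (2 * (n + k)) w x ui) as [t [Ht Htui]]; try lra.
  assert (c <= t).
  { apply Hcmin; split; [lra|].
    replace (n + k + i)%nat with (i + (n + k))%nat by lia.
    rewrite iter_double_add, Htui; exact Huid. }
  assert (t = x) by lra; subst t; lra.
Qed.

Lemma window_orbit_gt_d N : (0 < N)%nat -> iter f N x = x ->
  forall j, (j <= n + k + i)%nat -> d < iter f (2 * j) x.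
Proof.
  intros HN Hper j Hj.
  pose proof (periodic_iter2_neq_d N x HN Hper ltac:(lra) j).
  enough (d <= iter f (2 * j) x) by lra.
  destruct (first_return_exists k Hk) as [uk Huk].
  destruct (first_return_exists i Hi) as [ui Hui].
  destruct (le_lt_dec j n) as [Hjn|Hnj]; [apply (iter2_ge_d n un); auto; lra|].
  pose proof (iter2_ge_d n un x n Hun ltac:(lra) (le_n n)).
  destruct (le_lt_dec j (n + k)) as [Hjnk|Hnkj].
  - replace j with (j - n + n)%nat by lia; rewrite iter_double_add.
    apply (iter2_ge_d k uk); [exact Huk|split; [lra|apply window_iter_n_le, Huk]|lia].
  - replace j with (j - (n + k) + (n + k))%nat by lia; rewrite iter_double_add.
    apply (iter2_ge_d i ui); [exact Hui|split|lia].
    + exact window_iter_nk_ge_d.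
    + apply window_iter_nk_le, Hui.
Qed.

Lemma window_no_odd_return s : (s <= n + k + i)%nat -> iter f (2 * s + 1) x <> x.
Proof.
  intros Hs Hret.
  assert (Hlow : forall j, (j <= s)%nat -> d < iter f (2 * j) x)
    by (intros j Hj; apply (window_orbit_gt_d (2 * s + 1)); auto; lia).
  pose proof (z0_le_iter_odd x s ltac:(lra) Hlow); lra.
Qed.

(* a point of a periodic orbit is never u_j, since u_j reaches d *)
Lemma window_anchors r uk ui : (1 <= r)%nat -> iter f (2 * r) x = x ->
  first_return k uk -> first_return i ui ->
  x < un /\ d <= iter f (2 * n) x < uk /\ d <= iter f (2 * (n + k)) x < ui.
Proof.
  intros Hr Hret Huk Hui.
  pose proof (periodic_iter2_neq_d (2 * r) x ltac:(lia) Hret ltac:(lra)) as Hnohit.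
  split; [|split; split].
  - exact (lt_first_return x n un Hun (proj1 (proj2 window_mem)) (Hnohit n)).
  - apply (iter2_ge_d n un); [exact Hun|lra|lia].
  - apply (lt_first_return _ k uk Huk (window_iter_n_le uk Huk)).
    rewrite <- iter_double_add, Nat.add_comm; apply Hnohit.
  - exact window_iter_nk_ge_d.
  - apply (lt_first_return _ i ui Hui (window_iter_nk_le ui Hui)).
    rewrite <- iter_double_add; apply Hnohit.
Qed.

Lemma window_even_return r : (1 <= r <= n + k + i)%nat -> iter f (2 * r) x = x ->
  (r = n \/ r = n + k \/ r = n + k + i)%nat.
Proof.
  intros Hr Hret.
  destruct (first_return_exists k Hk) as [uk Huk].
  destruct (first_return_exists i Hi) as [ui Hui].
  destruct (window_anchors r uk ui ltac:(lia) Hret Huk Hui) as [Hx_lt [HA HB]].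
  pose proof window_mem.
  set (A := iter f (2 * n) x) in HA; set (B := iter f (2 * (n + k)) x) in HB.
  destruct (lt_eq_lt_dec r n) as [[Hrn|Hrn]|Hnr]; [exfalso|left; exact Hrn|].
  { pose proof (return_index_lt n un x r n un Hun ltac:(lra) ltac:(lia) Hn Hun
      ltac:(rewrite Hret; lra)); lia. }
  destruct (lt_eq_lt_dec r (n + k)) as [[Hrnk|Hrnk]|Hnkr]; [exfalso|right; left; exact Hrnk|].
  { assert (HAx : iter f (2 * (r - n)) A = x).
    { unfold A; rewrite <- iter_double_add, Nat.sub_add by lia; exact Hret. }
    assert (HAA : iter f (2 * (n + (r - n))) A = A) by (rewrite iter_double_add, HAx; reflexivity).
    pose proof (return_index_lt k uk A (r - n) n un Huk ltac:(lra) ltac:(lia) Hn Hun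
      ltac:(rewrite HAx; lra)).
    pose proof (return_index_lt k uk A (n + (r - n)) k uk Huk ltac:(lra) ltac:(lia) Hk Huk
      ltac:(rewrite HAA; lra)); lia. }
  destruct (Nat.eq_dec r (n + k + i)) as [Hrnki|Hrnki]; [right; right; exact Hrnki|exfalso].
  set (l := (r - (n + k))%nat).
  assert (HBx : iter f (2 * l) B = x).
  { unfold B, l; rewrite <- iter_double_add, Nat.sub_add by lia; exact Hret. }
  assert (HBA : iter f (2 * (n + l)) B = A) by (rewrite iter_double_add, HBx; reflexivity).
  assert (HBB : iter f (2 * (k + (n + l))) B = B).
  { rewrite iter_double_add, HBA; unfold A, B.
    rewrite <- iter_double_add, Nat.add_comm; reflexivity. }
  pose proof (return_index_lt i ui B l n un Hui ltac:(lra) ltac:(unfold l; lia) Hn Hun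
    ltac:(rewrite HBx; lra)).
  pose proof (return_index_lt i ui B (n + l) k uk Hui ltac:(lra) ltac:(lia) Hk Huk
    ltac:(rewrite HBA; lra)).
  pose proof (return_index_lt i ui B (k + (n + l)) i ui Hui ltac:(lra) ltac:(lia) Hi Hui
    ltac:(rewrite HBB; lra)); lia.
Qed.

Lemma window_least_period p : least_period f p x ->
  (Nat.odd p = true -> (2 * (n + k + i) + 1 < p)%nat) /\
  (Nat.even p = true -> (p <= 2 * (n + k + i))%nat ->
     (p = 2 * (n + k + i) \/ p = 2 * (n + k) \/ p = 2 * n)%nat).
Proof.
  intros [Hp [Hpx _]]; split.
  - intros Hodd; apply Nat.odd_spec in Hodd as [s ->].
    destruct (Nat.lt_ge_cases (2 * (n + k + i) + 1) (2 * s + 1)) as [|Hle]; [assumption|].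
    destruct (window_no_odd_return s ltac:(lia) Hpx).
  - intros Heven Hle; apply Nat.even_spec in Heven as [r ->].
    destruct (window_even_return r ltac:(lia) Hpx); lia.
Qed.

End Window.

End TwoCycle.

End SelfMap.

Theorem lemma12 (a b : R) (f : R -> R) (m : nat) (q v z z0 d : R)
  (n k i : nat) (un un1 w w1 c : R) :
  a <= b -> cont_on f a b -> maps_into f a b ->
  (3 <= m)%nat -> Nat.odd m = true ->
  (* q = min P, where P is the orbit of q, of least period m *)
  a <= q <= b -> least_period f m q -> (forall j, q <= iter f j q) ->
  let e := iter f (m - 1) q in
  q <= v < e -> f v = e ->
  v < z < e -> f z = z ->
  is_min (fun x => v <= x <= z /\ iter f 2 x = x) z0 ->
  is_max (fun x => q <= x <= v /\ iter f 2 x = z0) d ->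
  (1 <= n)%nat -> (1 <= k)%nat -> (1 <= i)%nat ->
  (* un = u_n, un1 = u_{n+1} *)
  is_min (fun x => d <= x <= v /\ iter f (2 * n) x = d) un ->
  is_min (fun x => d <= x <= v /\ iter f (2 * (n + 1)) x = d) un1 ->
  (* w = u'_{n,k}, w1 = u'_{n,k+1} *)
  is_max (fun x => un1 <= x <= un /\ iter f (2 * n + 2 * k) x = d) w ->
  is_max (fun x => un1 <= x <= un /\ iter f (2 * n + 2 * (k + 1)) x = d) w1 ->
  (* c = u_{n,k,i} *)
  is_min (fun x => w <= x <= w1 /\ iter f (2 * n + 2 * k + 2 * i) x = d) c ->
  forall (x : R) (p : nat), w <= x <= c -> least_period f p x ->
    (Nat.odd p = true -> (2 * n + 2 * k + 2 * i + 1 < p)%nat) /\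
    (Nat.even p = true -> (p <= 2 * n + 2 * k + 2 * i)%nat ->
       p = (2 * n + 2 * k + 2 * i)%nat \/ p = (2 * n + 2 * k)%nat \/ p = (2 * n)%nat).
Proof.
  intros Hab Hcont Hmaps Hm3 _ Hq [_ [Hqper Hqmin]] _ e Hv Hfv Hz _
    [[Hz0_mem Hz0_fix] Hz0_min] [[Hd_mem Hd_z0] Hd_max] Hn Hk Hi Hun Hun1 Hw
    [[Hw1_mem _] _] Hc x p Hx Hp.
  replace (2 * n + 2 * k)%nat with (2 * (n + k))%nat in Hw by lia.
  replace (2 * n + 2 * k + 2 * i)%nat with (2 * (n + k + i))%nat in Hc |- * by lia.
  assert (Hfe : f e = q).
  { unfold e; change (iter f (S (m - 1)) q = q); rewrite Nat.sub_1_r, Nat.succ_pred_pos by lia.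
    exact Hqper. }
  assert (Heb : e <= b) by (apply (iter_mem a b f Hmaps); lra).
  assert (Hqv : q < v).
  { destruct (proj1 Hv) as [Hlt|Heq]; [exact Hlt|exfalso].
    apply (Hqmin 2%nat); [lia|]. change (f (f q) = q); rewrite Heq at 1; rewrite Hfv; exact Hfe. }
  assert (Hv2 : iter f 2 v = q) by (change (f (f v) = q); rewrite Hfv; exact Hfe).
  assert (Hvz0 : v < z0)
    by (destruct (proj1 Hz0_mem) as [|Heq]; [assumption|rewrite <- Heq in Hz0_fix; lra]).
  assert (Hz0_first : forall y, v <= y < z0 -> iter f 2 y <> y)
    by (intros y Hy Hfix; enough (z0 <= y) by lra; apply Hz0_min; split; [lra|exact Hfix]).
  assert (Hd_last : forall y, d < y <= v -> iter f 2 y <> z0)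
    by (intros y Hy Hy2; enough (y <= d) by lra; apply Hd_max; split; [lra|exact Hy2]).
  destruct (window_least_period a b f Hab Hcont Hmaps q v e z0 d ltac:(lra) Heb Hqv Hvz0
    ltac:(lra) Hfv Hfe Hz0_fix Hz0_first ltac:(lra) ltac:(lra) Hd_z0 Hd_last n k i un un1 w w1 c x
    Hn Hk Hi Hun Hun1 Hw ltac:(lra) Hc Hx p Hp) as [Hodd Heven].
  split; [intros Hp_odd; specialize (Hodd Hp_odd); lia|].
  intros Hp_even Hle; specialize (Heven Hp_even ltac:(lia)); lia.
Qed.
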